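(* Let $G=(V,E)$ be a simple 2-vertex-connected graph and let $e=uv\in E$ be an irrelevant edge of $G$. Then there exists a minimum-size 2-edge-connected spanning subgraph of $G$ not containing $e$.
   Context: A $k$-vertex-cut of $G$ is a set of $k$ nodes whose removal leaves a graph with at least two connected components; $G$ is 2-vertex-connected (2VC) if it has at least 3 nodes, is connected, and has no 1-vertex-cut. An edge $uv\in E$ is irrelevant if $\{u,v\}$ is a 2-vertex-cut of $G$. A graph is 2-edge-connected (2EC) if it is connected and remains connected after removing any single edge; a spanning subgraph is a subgraph on all nodes of $V$, identified with its edge set. *)

From mathcomp Require Import all_boot.
Set Implicit Arguments. Unset Strict Implicit. Unset Printing Implicit Defensive.

Section Graphs.
Variable T : finType.

Definition simple_graph (adj : rel T) : Prop := symmetric adj /\ irreflexive adj.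

Definition edges (adj : rel T) : {set {set T}} :=
  [set [set x; y] | x in T, y in T & adj x y].

Definition adj_minus (adj : rel T) (S : {set T}) : rel T :=
  fun x y => [&& adj x y, x \notin S & y \notin S].

Definition connected_graph (adj : rel T) : Prop := forall x y : T, connect adj x y.

Definition disconnects (adj : rel T) (S : {set T}) : Prop :=
  exists x y : T, [/\ x \notin S, y \notin S & ~~ connect (adj_minus adj S) x y].

Definition vertex_cut (adj : rel T) (k : nat) (S : {set T}) : Prop :=
  #|S| = k /\ disconnects adj S.

Definition two_vertex_connected (adj : rel T) : Prop :=
  [/\ 3 <= #|T|, connected_graph adj & forall S, ~ vertex_cut adj 1 S].

Definition irrelevant_edge (adj : rel T) (u v : T) : Prop :=
  adj u v /\ vertex_cut adj 2 [set u; v].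

Definition edge_rel (F : {set {set T}}) : rel T :=
  fun x y => [set x; y] \in F.

Definition two_edge_connected_set (F : {set {set T}}) : Prop :=
  connected_graph (edge_rel F) /\
  forall f, f \in F -> connected_graph (edge_rel (F :\ f)).

(* spanning 2EC subgraph of G (identified with its edge set) *)
Definition two_ecss (adj : rel T) (F : {set {set T}}) : Prop :=
  F \subset edges adj /\ two_edge_connected_set F.

Definition min_two_ecss (adj : rel T) (F : {set {set T}}) : Prop :=
  two_ecss adj F /\ forall F', two_ecss adj F' -> #|F| <= #|F'|.

End Graphs.

(* Take a minimum 2-edge-connected spanning subgraph H containing e = uv, and
   split V along the 2-cut {u, v} into two sides D1, D2 with D1 ∩ D2 = {u, v}
   and no edge between D1 - {u, v} and D2 - {u, v}.  Since H - e is connected,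
   it joins u to v inside one of the sides, say D2.  If it also does so inside
   D1, then every edge of H - e misses one of these two paths, so H - e is
   already 2-edge-connected.  Otherwise, 2-vertex-connectivity yields a u-v
   path of G - e inside D1, and one of its edges f joins the vertices reached
   from u in D1 by H - e to those reached from v; then H - e + f is a
   2-edge-connected spanning subgraph of the same size avoiding e. *)

From mathcomp Require Import all_boot.
From Stdlib Require Import Classical.
Set Implicit Arguments. Unset Strict Implicit. Unset Printing Implicit Defensive.

Lemma ex_minimizer (A : Type) (P : A -> Prop) (m : A -> nat) :
  (exists a, P a) -> exists a, P a /\ forall b, P b -> m a <= m b.
Proof.
suff min_below n a : m a < n -> P a -> exists a, P a /\ forall b, P b -> m a <= m b.
  by case=> a Pa; apply: min_below (ltnSn _) Pa.
elim: n a => // n IHn a lt_an Pa.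
have [[b [Pb lt_ba]]|no_smaller] := classic (exists b, P b /\ m b < m a).
  exact: IHn b (leq_trans lt_ba lt_an) Pb.
exists a; split=> // b Pb; rewrite leqNgt; apply/negP => lt_ba.
by apply: no_smaller; exists b.
Qed.

Section Connect.
Variable T : finType.
Implicit Types (r : rel T) (D : {set T}).

Definition induced D r : rel T := fun x y => [&& r x y, x \in D & y \in D].

Lemma induced_sym D r : symmetric r -> symmetric (induced D r).
Proof. by move=> r_sym x y; rewrite /induced r_sym (andbC (x \in D)). Qed.

Lemma sub_induced D D' r r' :
  D \subset D' -> subrel r r' -> subrel (induced D r) (induced D' r').
Proof.
by move=> /subsetP sDD' srr' x y /and3P[/srr' r'xy /sDD' xD' /sDD' yD']; apply/and3P.
Qed.

Lemma induced_subrel D r : subrel (induced D r) r.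
Proof. by move=> x y /andP[]. Qed.

Lemma connect_subrel r r' : subrel r r' -> subrel (connect r) (connect r').
Proof. by move=> srr'; apply: connect_sub => x y /srr' /connect1. Qed.

Lemma connect_forward r (a : pred T) x y :
  (forall p q, a p -> r p q -> a q) -> connect r x y -> a x -> a y.
Proof.
move=> a_fwd /connectP[s]; elim: s x => [|z s IHs] x /=; first by move=> _ ->.
by move=> /andP[rxz rs] ly ax; apply: IHs rs ly (a_fwd _ _ ax rxz).
Qed.

Lemma connect_induced_mem D r x y :
  connect (induced D r) x y -> x \in D -> y \in D.
Proof. by move=> /connect_forward; apply=> p q _ /and3P[]. Qed.

Lemma connect_exit r (a : pred T) x y :
  connect r x y -> a x -> ~~ a y -> exists p q, [/\ a p, ~~ a q & r p q].
Proof.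
move=> rxy ax /negP nay; apply: NNPP => no_exit; apply/nay.
apply: connect_forward rxy ax => p q ap rpq; apply/negPn/negP => naq.
by apply: no_exit; exists p, q.
Qed.

Lemma connect_induced_component r c x :
  connect r c x -> connect (induced [set y | connect r c y] r) c x.
Proof.
pose C := [set y | connect r c y].
move=> rcx; suff /andP[] : connect r c x && connect (induced C r) c x by [].
apply: (connect_forward (a := fun y => connect r c y && connect (induced C r) c y)) rcx _;
  last by rewrite !connect0.
move=> p q /andP[rcp icp] rpq; have rcq := connect_trans rcp (connect1 rpq).
by rewrite rcq (connect_trans icp) // connect1 // /induced rpq !inE rcp.
Qed.

End Connect.

Section EdgeSets.
Variable T : finType.
Implicit Types (F : {set {set T}}) (x y a b : T).

Lemma set2_inj x y a b :
  [set x; y] = [set a; b] -> (x = a /\ y = b) \/ (x = b /\ y = a).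
Proof.
move=> E; have [xab yab] : x \in [set a; b] /\ y \in [set a; b] by rewrite -E set21 set22.
have [axy bxy] : a \in [set x; y] /\ b \in [set x; y] by rewrite E set21 set22.
by case/set2P: xab yab axy bxy => -> /set2P[] -> /set2P[] ? /set2P[] ?; subst; auto.
Qed.

Lemma edge_rel_sym F : symmetric (edge_rel F).
Proof. by move=> x y; rewrite /edge_rel setUC. Qed.

Lemma edge_rel_sub F F' : F \subset F' -> subrel (edge_rel F) (edge_rel F').
Proof. by move=> /subsetP sFF' x y /sFF'. Qed.

Lemma connected_replace_edge F F' a b :
  connected_graph (edge_rel F) -> F :\ [set a; b] \subset F' ->
  connect (edge_rel F') a b -> connected_graph (edge_rel F').
Proof.
move=> F_conn /subsetP sFF' ab x y; apply: connect_sub (F_conn x y) => p q Fpq.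
have [/set2_inj[[-> ->]|[-> ->]] //|pq_ab] := eqVneq [set p; q] [set a; b].
  by rewrite (sym_connect_sym (@edge_rel_sym F')).
by apply: connect1; apply: sFF'; rewrite in_setD1 pq_ab.
Qed.

Lemma connect_induced_avoid D F (f : {set T}) x y :
  connect (induced D (edge_rel F)) x y -> ~~ (f \subset D) ->
  connect (edge_rel (F :\ f)) x y.
Proof.
move=> Dxy fD; apply: connect_subrel Dxy => p q /and3P[Fpq pD qD].
rewrite /edge_rel in_setD1 andbC; apply/andP; split=> //; apply: contraNneq fD => <-.
by apply/subsetP => z /set2P[]->.
Qed.

End EdgeSets.

Section Graph.
Variables (T : finType) (adj : rel T).
Hypotheses (adj_sym : symmetric adj) (adj_irr : irreflexive adj).
Implicit Types (F : {set {set T}}) (S D : {set T}).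

Lemma edgesP (f : {set T}) :
  reflect (exists p q, adj p q /\ f = [set p; q]) (f \in edges adj).
Proof.
apply: (iffP imset2P) => [[p q _]|[p [q [pq ->]]]]; first by rewrite inE; exists p, q.
by exists p q; rewrite ?inE.
Qed.

Lemma mem_edges p q : adj p q -> [set p; q] \in edges adj.
Proof. by move=> pq; apply/edgesP; exists p, q. Qed.

Lemma edge_rel_edges : edge_rel (edges adj) =2 adj.
Proof.
move=> x y; apply/edgesP/idP => [[p [q [pq /set2_inj[[-> ->]|[-> ->]]]]]|]//.
  by rewrite adj_sym.
by move=> xy; exists x, y.
Qed.

Lemma edge_rel_sub_adj F : F \subset edges adj -> subrel (edge_rel F) adj.
Proof. by move=> sF x y /(edge_rel_sub sF); rewrite edge_rel_edges. Qed.

Lemma card_edge (f : {set T}) : f \in edges adj -> #|f| = 2.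
Proof.
case/edgesP=> p [q [pq ->]]; rewrite cards2; case: eqP pq => // ->.
by rewrite adj_irr.
Qed.

Lemma edge_subset_set2 (f : {set T}) a b :
  f \in edges adj -> f \subset [set a; b] -> f = [set a; b].
Proof.
move=> f_edge fab; apply/eqP; rewrite eqEcard fab (card_edge f_edge) cards2.
by case: (a != b).
Qed.

Lemma connect_del_vertex x z w : two_vertex_connected adj ->
  z != x -> w != x -> connect (adj_minus adj [set x]) z w.
Proof.
case=> _ _ no_cut zx wx; apply: NNPP => /negP nzw; apply: (no_cut [set x]).
by split; [exact: cards1 | exists z, w; rewrite !inE].
Qed.

Lemma adj_minus_del_edge (f : {set T}) p z w :
  p \in f -> adj_minus adj [set p] z w -> edge_rel (edges adj :\ f) z w.
Proof.
move=> pf /and3P[zw]; rewrite !inE => zp wp.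
rewrite /edge_rel in_setD1 mem_edges // andbT; apply: contraTneq pf => <-.
by rewrite !inE negb_or ![p == _]eq_sym zp wp.
Qed.

Lemma two_vertex_connected_two_ecss :
  two_vertex_connected adj -> two_ecss adj (edges adj).
Proof.
move=> G2; have G_conn : connected_graph (edge_rel (edges adj)).
  by case: G2 => _ conn _ x y; rewrite (eq_connect edge_rel_edges).
split=> //; split=> // f /edgesP[p [q [pq ->]]].
apply: connected_replace_edge G_conn (subxx _) _.
have [w /andP[wp wq]] : exists w, (w != p) && (w != q).
  case: G2 => card3 _ _; have : 0 < #|~: [set p; q]|.
    by move: (cardsC [set p; q]) card3; rewrite cards2 => <-; case: (p != q); case: #|_|.
  by case/card_gt0P => w; rewrite !inE negb_or; exists w.
have p_neq_q : p != q by apply: contraTneq pq => ->; rewrite adj_irr.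
apply: (@connect_trans _ _ w).
  rewrite (sym_connect_sym (@edge_rel_sym _ _)).
  apply: connect_subrel (connect_del_vertex G2 wq p_neq_q) => z y.
  by apply: adj_minus_del_edge; rewrite set22.
apply: connect_subrel (connect_del_vertex G2 wp _) => [z y|]; last by rewrite eq_sym.
by apply: adj_minus_del_edge; rewrite set21.
Qed.

Lemma adj_minus_sym S : symmetric (adj_minus adj S).
Proof. by move=> x y; rewrite /adj_minus adj_sym (andbC (x \notin S)). Qed.

Definition component S c : {set T} := [set w | connect (adj_minus adj S) c w].

Lemma mem_component S c : c \in component S c.
Proof. by rewrite inE connect0. Qed.

Lemma component_disjoint S c w : c \notin S -> w \in component S c -> w \notin S.
Proof.
move=> cS; rewrite inE => cw.
by apply: (connect_forward (a := fun z => z \notin S)) cw cS => p q _ /and3P[].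
Qed.

Lemma component_step S c p q :
  c \notin S -> p \in component S c -> adj p q -> q \notin S -> q \in component S c.
Proof.
move=> cS pC pq qS; have pS := component_disjoint cS pC.
by move: pC; rewrite !inE => /connect_trans; apply; apply/connect1/and3P.
Qed.

Lemma component_subC S a b :
  ~~ connect (adj_minus adj S) a b -> component S b \subset ~: component S a.
Proof.
move=> no_ab; apply/subsetP => w; rewrite !inE => bw; apply: contraNN no_ab => aw.
by rewrite (connect_trans aw) // (sym_connect_sym (adj_minus_sym S)).
Qed.

(* c reaches y in G - y', and the first step of that path leaving the
   component of c can only enter y. *)
Lemma neighbour_in_component y y' c : two_vertex_connected adj -> y != y' ->
  c \notin [set y; y'] -> exists2 p, p \in component [set y; y'] c & adj p y.
Proof.
move=> G2 yy' cS; have cy' : c != y' by apply: contraNneq cS => ->; rewrite set22.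
have yC : y \notin component [set y; y'] c.
  by apply: contraTN (set21 y y') => /(component_disjoint cS).
have [p [q [pC qC /and3P[pq _]]]] :=
  connect_exit (connect_del_vertex G2 cy' yy') (mem_component _ c) yC.
rewrite !inE => qy'; exists p => //.
have /set2P[<- // | qE] : q \in [set y; y'].
  by apply: contraNT qC => qS; apply: component_step pC pq qS.
by rewrite qE eqxx in qy'.
Qed.

Definition separation S D1 D2 : Prop :=
  [/\ D1 :|: D2 = setT, D1 :&: D2 = S &
      forall p q, p \in D1 :\: S -> q \in D2 :\: S -> ~~ adj p q].

Lemma separation_sym S D1 D2 : separation S D1 D2 -> separation S D2 D1.
Proof.
case=> DU DI no_adj; split; rewrite 1?setUC 1?setIC //.
by move=> p q p2 q1; rewrite adj_sym no_adj.
Qed.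

Lemma separation_sub S D1 D2 : separation S D1 D2 -> S \subset D1.
Proof. by case=> _ <- _; apply: subsetIl. Qed.

Lemma separation_cover S D1 D2 w : separation S D1 D2 -> w \notin D1 -> w \in D2.
Proof. by case=> DU _ _ wD1; move: (in_setT w); rewrite -DU inE (negbTE wD1). Qed.

Lemma separation_boundary S D1 D2 p q :
  separation S D1 D2 -> adj p q -> p \in D1 -> q \notin D1 -> p \in S.
Proof.
move=> sep pq pD1 qD1; have [_ _ no_adj] := sep; apply: contraTT pq => pS.
have qS : q \notin S by apply: contraNN qD1; apply: (subsetP (separation_sub sep)).
by apply: no_adj; rewrite inE ?pS ?qS ?(separation_cover sep).
Qed.

Lemma separation_component S c :
  c \notin S -> separation S (component S c :|: S) (~: component S c).
Proof.
move=> cS; split.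
- by rewrite setUAC setUCr setTU.
- apply/setP => z; rewrite in_setI in_setU in_setC.
  case zC: (z \in component S c); last by rewrite andbT.
  by rewrite andbF (negbTE (component_disjoint cS zC)).
- move=> p q; rewrite in_setD in_setU in_setD in_setC => /andP[pS /orP[pC|]];
    last by rewrite (negbTE pS).
  by case/andP=> qS qC; apply: contraNN qC => pq; apply: component_step pC pq qS.
Qed.

Lemma connect_separation_side u v c D : two_vertex_connected adj -> u != v ->
  c \notin [set u; v] -> component [set u; v] c \subset D -> u \in D -> v \in D ->
  connect (induced D (edge_rel (edges adj :\ [set u; v]))) u v.
Proof.
move=> G2 uv cS /subsetP CD uD vD; set S := [set u; v]; set C := component S c.
pose GeD := induced D (edge_rel (edges adj :\ S)).
have GeD_edge p x : p \in C -> x \in D -> adj p x -> GeD p x.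
  move=> pC xD px; rewrite /GeD /induced (CD p pC) xD andbT /edge_rel in_setD1.
  rewrite mem_edges // !andbT; apply/eqP => pxS.
  by move: (component_disjoint cS pC); rewrite -/S -pxS set21.
have GeD_path p : p \in C -> connect GeD c p.
  rewrite inE => /connect_induced_component; apply: connect_subrel => x y.
  by case/and3P=> /and3P[xy _ _] xC yC; apply: GeD_edge xC (CD y yC) xy.
have [pu pu_C pu_u] := neighbour_in_component G2 uv cS.
have [pv pv_C pv_v] : exists2 p, p \in C & adj p v.
  by rewrite /C /S setUC; apply: neighbour_in_component; rewrite // 1?eq_sym // setUC.
apply: (@connect_trans _ _ c).
  rewrite (sym_connect_sym (induced_sym D (@edge_rel_sym _ _))).
  exact: connect_trans (GeD_path _ pu_C) (connect1 (GeD_edge _ _ pu_C uD pu_u)).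
exact: connect_trans (GeD_path _ pv_C) (connect1 (GeD_edge _ _ pv_C vD pv_v)).
Qed.

End Graph.

Section Exchange.
Variables (T : finType) (adj : rel T) (u v : T).
Hypotheses (adj_sym : symmetric adj) (adj_irr : irreflexive adj).
Implicit Types (F H : {set {set T}}) (D : {set T}) (r : rel T).

Let e := [set u; v].

Lemma connect_separation_cover r D1 D2 w :
  separation adj e D1 D2 -> subrel r adj -> symmetric r -> connected_graph r ->
  w \in D1 -> connect (induced D1 r) u w || connect (induced D1 r) v w.
Proof.
move=> sep r_adj r_sym r_conn wD1; apply: NNPP => /negP unreached.
pose a z := (z \in D1) && ~~ (connect (induced D1 r) u z || connect (induced D1 r) v z).
have a_w : a w by rewrite /a wD1 unreached.
have a_u : ~~ a u by rewrite /a connect0 andbF.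
have [p [q [/andP[pD1 /negP p_unr] q_reached rpq]]] := connect_exit (r_conn w u) a_w a_u.
apply: p_unr; case: (boolP (q \in D1)) => qD1.
  move: q_reached; rewrite /a qD1 negbK.
  have rqp : induced D1 r q p by rewrite /induced r_sym rpq qD1 pD1.
  by case/orP=> /connect_trans/(_ (connect1 rqp)) ->; rewrite ?orbT.
by case/set2P: (separation_boundary sep (r_adj _ _ rpq) pD1 qD1) => ->;
  rewrite connect0 ?orbT.
Qed.

Lemma connect_separation_uv r D1 D2 :
  separation adj e D1 D2 -> subrel r adj -> connect r u v ->
  connect (induced D1 r) u v || connect (induced D2 r) u v.
Proof.
move=> sep r_adj ruv; apply: NNPP => /negP; rewrite negb_or => /andP[no1 no2].
have step D D' z w : separation adj e D D' -> ~~ connect (induced D r) u v ->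
    connect (induced D r) u z -> r z w ->
    connect (induced D r) u w || connect (induced D' r) u w.
  move=> sepD no_uv uz rzw.
  have uD := subsetP (separation_sub sepD) u (set21 u v).
  have uD' := subsetP (separation_sub (separation_sym adj_sym sepD)) u (set21 u v).
  have zD := connect_induced_mem uz uD.
  have [wD|wD] := boolP (w \in D).
    by rewrite (connect_trans uz (connect1 (_ : induced D r z w))) // /induced rzw zD wD.
  case/set2P: (separation_boundary sepD (r_adj _ _ rzw) zD wD) => zE; subst z.
    by rewrite orbC connect1 // /induced rzw uD' (separation_cover sepD wD).
  by rewrite uz in no_uv.
suff : connect (induced D1 r) u v || connect (induced D2 r) u v.
  by rewrite (negbTE no1) (negbTE no2).
apply: (connect_forward
  (a := fun z => connect (induced D1 r) u z || connect (induced D2 r) u z)) ruv _;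
  last by rewrite connect0.
move=> z w /orP[] uz rzw; first exact: step sep no1 uz rzw.
by rewrite orbC; apply: step (separation_sym adj_sym sep) no2 uz rzw.
Qed.

(* An edge f of H other than e is not contained in D1 :&: D2, so the u-v path
   of F on a side not containing f replaces e in H :\ f. *)
Lemma two_edge_connected_exchange H F D1 D2 :
  two_edge_connected_set H -> D1 :&: D2 \subset e ->
  F \subset edges adj -> e \notin F -> H :\ e \subset F ->
  connect (induced D1 (edge_rel F)) u v -> connect (induced D2 (edge_rel F)) u v ->
  (forall f, f \in F -> f \notin H -> connected_graph (edge_rel (F :\ f))) ->
  two_edge_connected_set F.
Proof.
move=> [H_conn H_del] D12e F_edges eF HeF uv1 uv2 new_del; split.
  have uvF := connect_subrel (@induced_subrel _ _ _) uv1.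
  exact: connected_replace_edge H_conn HeF uvF.
move=> f fF; have [fH|] := boolP (f \in H); last exact: new_del.
have f_side : ~~ (f \subset D1) || ~~ (f \subset D2).
  rewrite -negb_and -subsetI; apply: contraNN eF => fD12.
  have f_e := edge_subset_set2 adj_irr (subsetP F_edges f fF) (subset_trans fD12 D12e).
  by rewrite f_e in fF.
apply: connected_replace_edge (H_del f fH) _ _.
  apply/subsetP => g; rewrite !in_setD1 => /and3P[ge gf gH].
  by rewrite gf (subsetP HeF) // in_setD1 ge gH.
by case/orP: f_side; [apply: connect_induced_avoid uv1 | apply: connect_induced_avoid uv2].
Qed.

Section ContractedEdge.
Variable H : {set {set T}}.
Hypotheses (H_ecss : two_ecss adj H) (eH : e \in H).

Let K := H :\ e.

Let K_edges : K \subset edges adj.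
Proof. by case: H_ecss => H_edges _; apply: subset_trans (subsetDl H [set e]) H_edges. Qed.

Let K_conn : connected_graph (edge_rel K).
Proof. by case: H_ecss => _ [_ /(_ e eH)]. Qed.

Let K_adj : subrel (edge_rel K) adj.
Proof. exact: (@edge_rel_sub_adj _ _ adj_sym _ K_edges). Qed.

Lemma exchange_both_sides D1 D2 : separation adj e D1 D2 ->
  connect (induced D1 (edge_rel K)) u v -> connect (induced D2 (edge_rel K)) u v ->
  two_ecss adj K.
Proof.
move=> [_ D12 _] uv1 uv2; split=> //.
apply: two_edge_connected_exchange H_ecss.2 _ K_edges _ (subxx K) uv1 uv2 _.
- by rewrite D12.
- by rewrite setD11.
- by move=> f; rewrite in_setD1 => /andP[_ ->].
Qed.

Lemma exchange_one_side D1 D2 : separation adj e D1 D2 ->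
  connect (induced D1 (edge_rel (edges adj :\ e))) u v ->
  ~~ connect (induced D1 (edge_rel K)) u v -> connect (induced D2 (edge_rel K)) u v ->
  exists2 f, f \notin H & two_ecss adj (f |: K).
Proof.
move=> sep Ge_uv no_uv1 uv2; pose reach := connect (induced D1 (edge_rel K)) u.
have [p [q [up /negP uq /and3P[pq pD1 qD1]]]] :=
  connect_exit (a := reach) Ge_uv (connect0 _ u) no_uv1.
move: pq; rewrite /edge_rel in_setD1; set f := [set p; q] => /andP[fe f_edge].
have vq : connect (induced D1 (edge_rel K)) v q.
  by case/orP: (connect_separation_cover sep K_adj (@edge_rel_sym _ K) K_conn qD1).
have fK : f \notin K.
  apply/negP => fK; apply: uq; apply: connect_trans up (connect1 _).
  by rewrite /induced /edge_rel fK pD1 qD1.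
have fH : f \notin H by move: fK; rewrite in_setD1 fe.
have F_edges : f |: K \subset edges adj by rewrite subUset sub1set f_edge K_edges.
have KF : K \subset f |: K := subsetUr _ _.
have lift_K D := connect_subrel (sub_induced (subxx D) (edge_rel_sub KF)).
have uv1 : connect (induced D1 (edge_rel (f |: K))) u v.
  apply: connect_trans (lift_K D1 _ _ up) _.
  apply: (@connect_trans _ _ q); first by rewrite connect1 // /induced /edge_rel setU11 pD1 qD1.
  by rewrite (sym_connect_sym (induced_sym _ (@edge_rel_sym _ _))) lift_K.
exists f => //; split=> //.
apply: two_edge_connected_exchange H_ecss.2 _ F_edges _ KF uv1 (lift_K D2 _ _ uv2) _.
- by case: sep => _ ->.
- by rewrite in_setU1 negb_or eq_sym fe setD11.
- move=> g; rewrite in_setU1 => /orP[/eqP -> _|gK]; first by rewrite setU1K.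
  by rewrite (subsetP (subsetDl H [set e])).
Qed.

Lemma two_ecss_exchange D1 D2 : separation adj e D1 D2 ->
  connect (induced D1 (edge_rel (edges adj :\ e))) u v ->
  connect (induced D2 (edge_rel (edges adj :\ e))) u v ->
  exists F, [/\ two_ecss adj F, #|F| <= #|H| & e \notin F].
Proof.
wlog uv1 : D1 D2 / connect (induced D1 (edge_rel K)) u v.
  move=> wlog_uv1 sep Ge_uv1 Ge_uv2.
  case/orP: (connect_separation_uv sep K_adj (K_conn u v)) => [uv1|uv2].
    exact: wlog_uv1 uv1 sep Ge_uv1 Ge_uv2.
  exact: wlog_uv1 uv2 (separation_sym adj_sym sep) Ge_uv2 Ge_uv1.
move=> sep Ge_uv1 Ge_uv2; have [uv2|no_uv2] := boolP (connect (induced D2 (edge_rel K)) u v).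
  exists K; split; first exact: exchange_both_sides sep uv1 uv2.
    exact: subset_leq_card (subsetDl H [set e]).
  by rewrite setD11.
have [f fH f_ecss] := exchange_one_side (separation_sym adj_sym sep) Ge_uv2 no_uv2 uv1.
exists (f |: K); split=> //.
  by rewrite cardsU1 (cardsD1 e H) eH leq_add2r leq_b1.
by rewrite in_setU1 negb_or setD11 andbT; apply: contraNneq fH => <-.
Qed.

End ContractedEdge.

End Exchange.

Theorem lemma1 (T : finType) (adj : rel T) (u v : T) :
  simple_graph adj -> two_vertex_connected adj -> irrelevant_edge adj u v ->
  exists F : {set {set T}}, min_two_ecss adj F /\ [set u; v] \notin F.
Proof.
move=> [adj_sym adj_irr] G2 [uv [_ [a [b [aS bS no_ab]]]]].
have [F0 [F0_ecss F0_min]] :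
    exists F, two_ecss adj F /\ forall F', two_ecss adj F' -> #|F| <= #|F'|.
  by apply: ex_minimizer; exists (edges adj); apply: two_vertex_connected_two_ecss.
have [eF0|] := boolP ([set u; v] \in F0); last by exists F0.
have u_neq_v : u != v by apply: contraTneq uv => ->; rewrite adj_irr.
set S := [set u; v] in aS bS no_ab eF0 *; set Ca := component adj S a.
have sep : separation adj S (Ca :|: S) (~: Ca) := separation_component adj aS.
have /subsetP S_D1 := separation_sub sep.
have /subsetP S_D2 := separation_sub (separation_sym adj_sym sep).
have side1 := connect_separation_side G2 u_neq_v aS (subsetUl _ _)
  (S_D1 _ (set21 u v)) (S_D1 _ (set22 u v)).
have side2 := connect_separation_side G2 u_neq_v bS (component_subC adj_sym no_ab)
  (S_D2 _ (set21 u v)) (S_D2 _ (set22 u v)).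
have [F [F_ecss F_card eF]] :=
  two_ecss_exchange adj_sym adj_irr F0_ecss eF0 sep side1 side2.
exists F; split=> //; split=> // F' F'_ecss.
exact: leq_trans F_card (F0_min F' F'_ecss).
Qed.
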